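(* Let $M$ be a sofic monoid, let $\Sigma=(D_i,\sigma_i)_{i\in I}$ be a sofic approximation of $M$, and let $A$ be a finite set. Then $h_\Sigma(A^M,M,\rho)=\log|A|$, where $\rho$ is the pseudometric on $A^M$ given by $\rho(x,y)=0$ if $x(1_M)=y(1_M)$ and $\rho(x,y)=1$ otherwise.
   Context: $A^M$ is the set of maps $M\to A$ with the prodiscrete topology and shift action $(mx)(m')=x(m'm)$. Hamming metric on $\operatorname{Map}(D)$ (maps $D\to D$, $D$ finite non-empty): $d_D^{\mathrm{Ham}}(f,g)=\frac{1}{|D|}|\{v:f(v)\ne g(v)\}|$. A sofic approximation of $M$ is a net $(D_i,\sigma_i)_{i\in I}$ over a directed set, $D_i$ non-empty finite, $\sigma_i\colon M\to\operatorname{Map}(D_i)$, with $\sigma_i(1_M)=\mathrm{Id}_{D_i}$, $\lim_i d^{\mathrm{Ham}}_{D_i}(\sigma_i(m_1m_2),\sigma_i(m_1)\sigma_i(m_2))=0$ for all $m_1,m_2$, and $\lim_i d^{\mathrm{Ham}}_{D_i}(\sigma_i(m_1),\sigma_i(m_2))=1$ for distinct $m_1,m_2$; $M$ is sofic iff it admits one. For a compact space $X$ with continuous $M$-action and continuous pseudometric $\rho$, and non-empty finite $D$: on $X^D$, $\rho_2^D(\varphi,\psi)=(\frac{1}{|D|}\sum_v\rho(\varphi(v),\psi(v))^2)^{1/2}$, $\rho_\infty^D(\varphi,\psi)=\max_v\rho(\varphi(v),\psi(v))$, $(m\varphi)(v)=m\varphi(v)$; for finite $F\subset M$, $\delta>0$,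 $\sigma\colon M\to\operatorname{Map}(D)$: $\operatorname{Map}(X,M,\rho,F,\delta,\sigma)=\{\varphi\in X^D:\rho_2^D(\varphi\circ\sigma(m),m\varphi)\le\delta\ \forall m\in F\}$. $N_\varepsilon(Z,d)$ is the maximal cardinality of a subset of $Z$ with pairwise $d$-distances $\ge\varepsilon$. $h_\Sigma(X,M,\rho)=\sup_{\varepsilon>0}\inf_F\inf_{\delta>0}\limsup_i\frac{1}{|D_i|}\log N_\varepsilon(\operatorname{Map}(X,M,\rho,F,\delta,\sigma_i),\rho_\infty^{D_i})$, infimum over finite $F\subset M$, $\log 0=-\infty$. *)

From HB Require Import structures.
From mathcomp Require Import all_boot all_order all_algebra.
From mathcomp Require Import all_classical all_reals all_analysis.
Set Implicit Arguments. Unset Strict Implicit. Unset Printing Implicit Defensive.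
Import Order.TTheory GRing.Theory Num.Theory.
Local Open Scope classical_set_scope.
Local Open Scope ring_scope.

Definition is_monoid (M : Type) (mul : M -> M -> M) (one : M) : Prop :=
  [/\ forall a b c, mul a (mul b c) = mul (mul a b) c,
      forall a, mul one a = a &
      forall a, mul a one = a].

Definition is_directed (I : Type) (le : I -> I -> Prop) : Prop :=
  [/\ (exists i : I, True),
      (forall i, le i i),
      (forall i j k, le i j -> le j k -> le i k) &
      (forall i j, exists k, le i k /\ le j k)].

Definition net_lim {R : realType} (I : Type) (le : I -> I -> Prop)
  (a : I -> R) (l : R) : Prop :=
  forall e : R, 0 < e -> exists i0, forall i, le i0 i -> `|a i - l| < e.

Definition net_limsup {R : realType} (I : Type) (le : I -> I -> Prop)
  (a : I -> \bar R) : \bar R :=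
  ereal_inf [set ereal_sup [set a i | i in [set i | le i0 i]] | i0 in [set: I]].

Definition hamming {R : realType} (D : finType) (f g : D -> D) : R :=
  (#|[set v | f v != g v]|%:R) / (#|D|%:R).

Definition sofic_approx {R : realType} (M : Type) (mul : M -> M -> M) (one : M)
  (I : Type) (le : I -> I -> Prop) (D : I -> finType)
  (sigma : forall i, M -> D i -> D i) : Prop :=
  [/\ is_directed le,
      (forall i, 0 < #|D i|)%N,
      (forall i, sigma i one = id),
      (forall m1 m2, net_lim le
         (fun i => @hamming R (D i) (sigma i (mul m1 m2)) (fun v => sigma i m1 (sigma i m2 v))) 0) &
      (forall m1 m2, m1 <> m2 -> net_lim le
         (fun i => @hamming R (D i) (sigma i m1) (sigma i m2)) 1)].

Definition rho2 {R : realType} (X : Type) (rho : X -> X -> R) (D : finType)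
  (phi psi : D -> X) : R :=
  Num.sqrt ((#|D|%:R)^-1 * \sum_(v : D) (rho (phi v) (psi v)) ^+ 2).

Definition rhoinf {R : realType} (X : Type) (rho : X -> X -> R) (D : finType)
  (phi psi : D -> X) : R :=
  \big[Num.max/0]_(v : D) rho (phi v) (psi v).

Definition MapSet {R : realType} (X : Type) (M : Type) (act : M -> X -> X)
  (rho : X -> X -> R) (F : set M) (delta : R) (D : finType)
  (sigma : M -> D -> D) : set (D -> X) :=
  [set phi : D -> X | forall m, F m ->
     rho2 rho (fun v => phi (sigma m v)) (fun v => act m (phi v)) <= delta].

(* N_eps(Z, d): maximal cardinality (possibly +oo) of an eps-separated subset
   of Z; a subset of cardinality n is the image of an injective 'I_n -> T. *)
Definition Nsep {R : realType} (T : Type) (Z : set T) (d : T -> T -> R) (eps : R)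
  : \bar R :=
  ereal_sup [set (n%:R)%:E | n in [set n : nat | exists f : 'I_n -> T,
     [/\ injective f, (forall k, Z (f k)) &
         (forall k l, k != l -> eps <= d (f k) (f l))]]].

(* logarithm on [0, +oo] with log 0 = -oo (and log +oo = +oo) *)
Definition elog {R : realType} (x : \bar R) : \bar R :=
  match x with
  | EFin r => if (r <= 0)%R then -oo%E else (ln r)%:E
  | +oo%E => +oo%E
  | -oo%E => -oo%E
  end.

Definition sofic_entropy {R : realType} (X : Type) (M : Type) (act : M -> X -> X)
  (rho : X -> X -> R) (I : Type) (le : I -> I -> Prop) (D : I -> finType)
  (sigma : forall i, M -> D i -> D i) : \bar R :=
  ereal_sup [set
    ereal_inf [set
      ereal_inf [set
        net_limsup le (fun i =>
          ((#|D i|%:R)^-1)%:E *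
          elog (Nsep (MapSet act rho F delta (sigma i)) (rhoinf rho (D:=D i)) eps))%E
      | delta in [set delta : R | 0 < delta]]
    | F in [set F : set M | finite_set F]]
  | eps in [set eps : R | 0 < eps]].

Definition full_shift (M A : Type) (mul : M -> M -> M) (m : M) (x : M -> A) : M -> A :=
  fun m' => x (mul m' m).

Definition rho_one {R : realType} (M : Type) (A : eqType) (one : M)
  (x y : M -> A) : R :=
  if x one == y one then 0 else 1.

(* The pseudometric rho only sees the coordinate at 1, so an eps-separated
   family of microstates has pairwise distinct patterns v |-> phi v 1 in A^D,
   whence N_eps <= |A|^|D|.  Conversely, every omega in A^D gives the microstate
   v |-> (m |-> omega (sigma m v)), which is an exact model (since sigma 1 = id
   and 1 m = m) for every F and delta, and distinct omega are 1-separated.  So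
   for eps <= 1 every term of the limsup equals log |A|. *)
From HB Require Import structures.
From mathcomp Require Import all_boot all_order all_algebra.
From mathcomp Require Import all_classical all_reals all_analysis.
From mathcomp Require Import ring.
Set Implicit Arguments. Unset Strict Implicit. Unset Printing Implicit Defensive.
Import Order.TTheory GRing.Theory Num.Theory.
Local Open Scope classical_set_scope.
Local Open Scope ring_scope.

Section Pseudometrics.
Variables (R : realType) (X : Type) (rho : X -> X -> R) (D : finType).
Variables (phi psi : D -> X).

Lemma le_rhoinf (v : D) : rho (phi v) (psi v) <= rhoinf rho phi psi.
Proof. exact: (le_bigmax 0 (fun v => rho (phi v) (psi v)) v). Qed.

Hypothesis rho_eq0 : forall v, rho (phi v) (psi v) = 0.

Lemma rhoinf_eq0 : rhoinf rho phi psi = 0.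
Proof.
apply: (big_ind (fun x : R => x = 0)) => [//|x y -> ->|v _]; first by rewrite maxxx.
exact: rho_eq0.
Qed.

Lemma rho2_eq0 : rho2 rho phi psi = 0.
Proof. by rewrite /rho2 big1 ?mulr0 ?sqrtr0 // => v _; rewrite rho_eq0 expr0n. Qed.

End Pseudometrics.

Section SeparatedSets.
Variables (R : realType) (T : Type) (Z : set T) (d : T -> T -> R) (eps : R).

Lemma Nsep_le_card (P : finType) (g : T -> P) :
    (forall x y, Z x -> Z y -> g x = g y -> d x y < eps) ->
  (Nsep Z d eps <= (#|P|%:R)%:E)%E.
Proof.
move=> g_sep; apply: ge_ereal_sup => _ [n [f [_ Zf f_sep]] <-].
have gf_inj : injective (g \o f).
  move=> k l gfkl; apply/eqP/negPn/negP => neq_kl.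
  by have := f_sep _ _ neq_kl; rewrite leNgt g_sep.
by rewrite lee_fin ler_nat -[n]card_ord (leq_card _ gf_inj).
Qed.

Lemma card_le_Nsep (P : finType) (f : P -> T) :
    injective f -> (forall p, Z (f p)) ->
    (forall p q, p != q -> eps <= d (f p) (f q)) ->
  ((#|P|%:R)%:E <= Nsep Z d eps)%E.
Proof.
move=> f_inj Zf f_sep; apply: ereal_sup_ubound; exists #|P| => //.
exists (f \o enum_val); split => [k l /f_inj/enum_val_inj //|k|k l neq_kl].
  exact: Zf.
by apply: f_sep; apply: contra neq_kl => /eqP/enum_val_inj ->.
Qed.

End SeparatedSets.

Section FullShiftMicrostates.
Variables (R : realType) (M : Type) (mul : M -> M -> M) (one : M) (A : finType).
Variables (D : finType) (sigma : M -> D -> D).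

Local Notation rho := (@rho_one R M A one).

Lemma Nsep_full_shift_le (Z : set (D -> M -> A)) (eps : R) : 0 < eps ->
  (Nsep Z (rhoinf rho (D:=D)) eps <= ((#|A| ^ #|D|)%N%:R)%:E)%E.
Proof.
move=> eps_gt0; rewrite -card_ffun.
apply: (Nsep_le_card (g := fun phi => [ffun v => phi v one])) => phi psi _ _.
move/ffunP => eq_phi_psi; rewrite rhoinf_eq0 // => v.
by have := eq_phi_psi v; rewrite !ffunE /rho_one => ->; rewrite eqxx.
Qed.

Definition pattern_microstate (omega : {ffun D -> A}) : D -> M -> A :=
  fun v m => omega (sigma m v).

Hypothesis mul1m : forall m, mul one m = m.
Hypothesis sigma1 : sigma one = id.

Lemma pattern_microstate_one omega v : pattern_microstate omega v one = omega v.
Proof. by rewrite /pattern_microstate sigma1. Qed.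

Lemma pattern_microstate_in_MapSet (F : set M) (delta : R) omega : 0 <= delta ->
  MapSet (full_shift mul) rho F delta sigma (pattern_microstate omega).
Proof.
move=> delta_ge0 m _; rewrite rho2_eq0 // => v.
by rewrite /rho_one /full_shift mul1m pattern_microstate_one eqxx.
Qed.

Lemma Nsep_full_shift_ge (F : set M) (delta eps : R) : 0 <= delta -> eps <= 1 ->
  (((#|A| ^ #|D|)%N%:R)%:E <=
   Nsep (MapSet (full_shift mul) rho F delta sigma) (rhoinf rho (D:=D)) eps)%E.
Proof.
move=> delta_ge0 eps_le1; rewrite -card_ffun.
apply: (card_le_Nsep (f := pattern_microstate))
  => [omega omega' eq_omega|omega|omega omega' neq_omega].
- by apply/ffunP => v; rewrite -!pattern_microstate_one eq_omega.
- exact: pattern_microstate_in_MapSet.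
have [v neq_v] : exists v, omega v != omega' v.
  apply/existsP; apply: contraR neq_omega => /existsPn eq_v.
  by apply/eqP/ffunP => v; apply/eqP/negPn.
apply: le_trans eps_le1 (le_trans _ (le_rhoinf _ _ _ v)).
by rewrite /rho_one !pattern_microstate_one (negbTE neq_v).
Qed.

End FullShiftMicrostates.

Lemma le_elog (R : realType) (x y : \bar R) : (x <= y)%E -> (elog x <= elog y)%E.
Proof.
case: x => [r| |]; last by move=> _; exact: leNye.
- rewrite /=; case: ifPn => [_ _|r_gt0]; first exact: leNye.
  case: y => [s| |] //= le_rs; last exact: leey.
  have {}le_rs : r <= s by rewrite -lee_fin.
  have s_gt0 : 0 < s by rewrite (lt_le_trans _ le_rs) // ltNge.
  by rewrite ifN -?ltNge // lee_fin ler_ln // posrE ltNge.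
- by case: y.
Qed.

Lemma elog_expn_scaled (R : realType) (a n : nat) : (0 < n)%N ->
  ((n%:R : R)^-1%:E * elog (((a ^ n)%N%:R : R)%:E) = elog ((a%:R : R)%:E))%E.
Proof.
move=> n_gt0 /=; case: a => [|a].
  by rewrite exp0n // !lexx gt0_muleNy // lte_fin invr_gt0 ltr0n.
rewrite !ifN -?ltNge ?ltr0n ?expn_gt0 //= natrX lnXn ?ltr0n // -EFinM.
have n_neq0 : (n%:R : R) != 0 by rewrite pnatr_eq0 -lt0n.
by congr EFin; rewrite -mulr_natr; field.
Qed.

Section NetLimsup.
Variables (R : realType) (I : Type) (le : I -> I -> Prop) (a : I -> \bar R) (c : \bar R).

Lemma net_limsup_le : (exists i : I, True) -> (forall i, (a i <= c)%E) ->
  (net_limsup le a <= c)%E.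
Proof.
case=> i0 _ a_le; apply: le_trans (ereal_inf_lbound _) _; first by exists i0.
by apply: ge_ereal_sup => _ [i _ <-].
Qed.

Lemma net_limsup_ge : (forall i, le i i) -> (forall i, (c <= a i)%E) ->
  (c <= net_limsup le a)%E.
Proof.
move=> le_refl a_ge; apply: le_ereal_inf_tmp => _ [i0 _ <-].
by apply: le_trans (a_ge i0) _; apply: ereal_sup_ubound; exists i0.
Qed.

End NetLimsup.

Section SoficEntropyBounds.
Variables (R : realType) (X M : Type) (act : M -> X -> X) (rho : X -> X -> R).
Variables (I : Type) (le : I -> I -> Prop) (D : I -> finType).
Variables (sigma : forall i, M -> D i -> D i) (c : \bar R).
Arguments sigma : clear implicits.

Definition scaled_log_Nsep (F : set M) (delta eps : R) (i : I) : \bar R :=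
  (((#|D i|%:R)^-1)%:E *
   elog (Nsep (MapSet act rho F delta (sigma i)) (rhoinf rho (D:=D i)) eps))%E.

Lemma sofic_entropy_le : (exists i : I, True) ->
    (forall eps F delta i, 0 < eps -> (scaled_log_Nsep F delta eps i <= c)%E) ->
  (sofic_entropy act rho le sigma <= c)%E.
Proof.
move=> I_nonempty term_le; apply: ge_ereal_sup => _ [eps eps_gt0 <-].
apply: le_trans (ereal_inf_lbound _) _; first by exists set0; first exact: finite_set0.
apply: le_trans (ereal_inf_lbound _) _; first by exists 1; first exact: ltr01.
by apply: net_limsup_le => // i; apply: term_le.
Qed.

Lemma sofic_entropy_ge (eps : R) : 0 < eps -> (forall i, le i i) ->
    (forall F delta i, 0 < delta -> (c <= scaled_log_Nsep F delta eps i)%E) ->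
  (c <= sofic_entropy act rho le sigma)%E.
Proof.
move=> eps_gt0 le_refl term_ge; apply: le_trans _ (ereal_sup_ubound _); last first.
  by exists eps.
apply: le_ereal_inf_tmp => _ [F _ <-]; apply: le_ereal_inf_tmp => _ [delta delta_gt0 <-].
by apply: net_limsup_ge => // i; apply: term_ge.
Qed.

End SoficEntropyBounds.

Theorem lemma5p2 (R : realType) (M : Type) (mul : M -> M -> M) (one : M)
  (I : Type) (le : I -> I -> Prop) (D : I -> finType)
  (sigma : forall i, M -> D i -> D i) (A : finType) :
  is_monoid mul one ->
  @sofic_approx R M mul one I le D sigma ->
  sofic_entropy (@full_shift M A mul) (@rho_one R M A one) le sigma
  = elog ((#|A|%:R : R)%:E).
Proof.
move=> [_ mul1m _] [[I_nonempty le_refl _ _] D_nonempty sigma1 _ _].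
have scaled_elog_count i :
    elog ((#|A|%:R : R)%:E) = ((#|D i|%:R : R)^-1%:E * elog (((#|A| ^ #|D i|)%N%:R : R)%:E))%E.
  by rewrite elog_expn_scaled.
have inv_card_gt0 i : (0 < ((#|D i|%:R : R)^-1)%:E)%E by rewrite lte_fin invr_gt0 ltr0n.
apply/le_anti/andP; split.
- apply: sofic_entropy_le => // eps F delta i eps_gt0.
  rewrite (scaled_elog_count i) /scaled_log_Nsep lee_pmul2l //; apply: le_elog.
  exact: Nsep_full_shift_le.
- apply: (sofic_entropy_ge ltr01) => // F delta i delta_gt0.
  rewrite (scaled_elog_count i) /scaled_log_Nsep lee_pmul2l //; apply: le_elog.
  by apply: Nsep_full_shift_ge => //; exact: ltW.
Qed.
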